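(* Let $\tau>0$, let $K\ge 1$ be an integer, and let $v_{max}>0$ and $u_b<0$ be constants. Consider a vehicle with speed bound $\overline v\in(0,v_{max}]$ and acceleration bounds $\underline u\le u_b<0<\overline u$, whose state evolves under the discrete dynamics described in the context. Assume $$K\tau\ \ge\ \frac{v_{max}}{|u_b|}+\tau .$$ Let $(s^0,v^0)$ with $v^0\in[0,\overline v]$ be an initial state and let $(u^k)_{0\le k<K}$ be an admissible control sequence, producing the admissible trajectory $(s^k,v^k)_{0\le k\le K}$. Then there exists an admissible control sequence $(\tilde u^k)_{0\le k\le K}$ with $\tilde u^0=u^0$ such that the corresponding trajectory $(\tilde s^k,\tilde v^k)_{0\le k\le K+1}$ starting from the same initial state $(\tilde s^0,\tilde v^0)=(s^0,v^0)$ satisfies $$\tilde v^K=\tilde v^{K+1}=0\qquad\text{and}\qquad \tilde s^{K+1}\le s^K .$$ (Equivalently, under the associated piecewise-constant acceleration in continuous time, the vehicle is at rest on the whole interval $[K\tau,(K+1)\tau]$ and its position at time $(K+1)\tau$ does not exceed the position of the original trajectory at time $K\tau$.)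
   Context: Time is discretized with step $\tau>0$; a vehicle applies a constant longitudinal acceleration $u^k$ on $[k\tau,(k+1)\tau)$. Its curvilinear position $s^k$ and longitudinal speed $v^k$ at time $k\tau$ obey $$v^{k+1}=v^k+u^k\tau,\qquad s^{k+1}=s^k+\tfrac12\,(v^k+v^{k+1})\,\tau ,$$ which are the exact double-integrator dynamics under piecewise-constant acceleration. A control sequence (and the resulting trajectory) is called admissible if for every index $k$ where it is defined, $u^k\in[\underline u,\overline u]$, and every resulting speed satisfies $v^k\in[0,\overline v]$ (speeds must be nonnegative and bounded by $\overline v$). *)

From Stdlib Require Import Reals Lra.
Open Scope R_scope.

Fixpoint vel (tau v0 : R) (u : nat -> R) (k : nat) : R :=
  match k with
  | O => v0
  | S k' => vel tau v0 u k' + u k' * tau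
  end.

Fixpoint posn (tau s0 v0 : R) (u : nat -> R) (k : nat) : R :=
  match k with
  | O => s0
  | S k' => posn tau s0 v0 u k'
            + / 2 * (vel tau v0 u k' + vel tau v0 u (S k')) * tau
  end.

Definition admissible (tau umin umax vbar v0 : R) (u : nat -> R) (N : nat) : Prop :=
  (forall k, (k < N)%nat -> umin <= u k <= umax) /\
  (forall k, (k <= N)%nat -> 0 <= vel tau v0 u k <= vbar).

(* The safe trajectory is built from its speed profile: it copies the first
   step of the given trajectory, and afterwards its speed is the original
   speed capped by braking at rate [|ub|], clipped at 0.  Braking at rate at
   least [|ub|] from a speed [<= vmax] reaches 0 within [K - 1] steps, and a
   pointwise smaller speed profile travels a smaller distance. *)

From Stdlib Require Import Reals Lra Lia.
Open Scope R_scope.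

Definition controls_of (tau : R) (w : nat -> R) (k : nat) : R :=
  (w (S k) - w k) / tau.

Lemma vel_controls_of tau w k :
  0 < tau -> vel tau (w 0%nat) (controls_of tau w) k = w k.
Proof.
  intros tau_gt0; induction k as [|k IH]; cbn [vel]; [reflexivity|].
  rewrite IH; unfold controls_of; field; lra.
Qed.

Lemma controls_of_in tau w a b k :
  0 < tau -> a * tau <= w (S k) - w k <= b * tau ->
  a <= controls_of tau w k <= b.
Proof.
  intros tau_gt0 [lo hi]; unfold controls_of; split.
  - apply (Rmult_le_reg_r tau); [lra|]; field_simplify; lra.
  - apply (Rmult_le_reg_r tau); [lra|]; field_simplify; lra.
Qed.

Lemma posn_le_posn tau s0 v1 v2 u1 u2 N :
  0 <= tau ->
  (forall k, (k <= N)%nat -> vel tau v1 u1 k <= vel tau v2 u2 k) ->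
  posn tau s0 v1 u1 N <= posn tau s0 v2 u2 N.
Proof.
  intros tau_ge0 vel_le; induction N as [|N IH]; cbn [posn]; [lra|].
  assert (IH' := IH (fun k Hk => vel_le k (Nat.le_le_succ_r _ _ Hk))).
  assert (vel_le_N := vel_le N (Nat.le_succ_diag_r N)).
  assert (vel_le_SN := vel_le (S N) (le_n _)).
  nra.
Qed.

Lemma braking_horizon tau K vmax ub :
  0 < tau -> ub < 0 ->
  INR (S K) * tau >= vmax / Rabs ub + tau -> vmax <= INR K * tau * - ub.
Proof.
  intros tau_gt0 ub_lt0 horizon.
  rewrite S_INR, Rabs_left in horizon by lra.
  replace vmax with (vmax / - ub * - ub) by (field; lra).
  apply Rmult_le_compat_r; lra.
Qed.

Section Braking.

Variables (tau ub v0 : R) (u : nat -> R).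
Hypotheses (tau_gt0 : 0 < tau) (ub_lt0 : ub < 0).
Hypotheses (v0_ge0 : 0 <= v0) (vel1_ge0 : 0 <= vel tau v0 u 1).

Fixpoint brake (k : nat) : R :=
  match k with
  | O => v0
  | S O => vel tau v0 u 1
  | S (S _ as k1) => Rmax 0 (Rmin (vel tau v0 u (S k1)) (brake k1 + ub * tau))
  end.

Lemma brake_SS k :
  brake (S (S k)) = Rmax 0 (Rmin (vel tau v0 u (S (S k))) (brake (S k) + ub * tau)).
Proof. reflexivity. Qed.

Lemma brake_ge0 k : 0 <= brake k.
Proof. destruct k as [|[|k]]; [exact v0_ge0 | exact vel1_ge0 | apply Rmax_l]. Qed.

Lemma brake_SS_le k : brake (S (S k)) <= Rmax 0 (brake (S k) + ub * tau).
Proof. rewrite brake_SS; apply Rle_max_compat_l, Rmin_r. Qed.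

Lemma brake_SS_ge k : Rmin (vel tau v0 u (S (S k))) (brake (S k) + ub * tau) <= brake (S (S k)).
Proof. rewrite brake_SS; apply Rmax_r. Qed.

Lemma brake_nonincr k : brake (S (S k)) <= brake (S k).
Proof.
  assert (ub * tau < 0) by nra.
  assert (brake_Sk_ge0 := brake_ge0 (S k)).
  eapply Rle_trans; [apply brake_SS_le|]; apply Rmax_lub; lra.
Qed.

Lemma brake_le_brake1 k : brake (S k) <= brake 1.
Proof.
  induction k as [|k IH]; [lra|].
  eapply Rle_trans; [apply brake_nonincr | exact IH].
Qed.

Lemma brake_le_vel k : 0 <= vel tau v0 u k -> brake k <= vel tau v0 u k.
Proof.
  intros vel_ge0; destruct k as [|[|k]]; [apply Rle_refl | apply Rle_refl |].
  apply Rmax_lub; [exact vel_ge0 | apply Rmin_l].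
Qed.

Lemma brake_le_linear k : brake (S k) <= Rmax 0 (brake 1 + INR k * ub * tau).
Proof.
  induction k as [|k IH].
  - rewrite Rmult_0_l, Rmult_0_l, Rplus_0_r; apply Rmax_r.
  - eapply Rle_trans; [apply brake_SS_le|].
    rewrite S_INR; revert IH; unfold Rmax.
    repeat destruct Rle_dec; nra.
Qed.

Lemma brake_eq0 k : brake 1 <= INR k * tau * - ub -> brake (S k) = 0.
Proof.
  intros horizon.
  assert (brake 1 + INR k * ub * tau <= 0) by lra.
  apply Rle_antisym; [|apply brake_ge0].
  eapply Rle_trans; [apply brake_le_linear|]; apply Rmax_lub; lra.
Qed.

Lemma brake_stopped N : (1 <= N)%nat -> brake N = 0 -> brake (S N) = 0.
Proof.
  intros N_ge1 stopped; destruct N as [|N]; [lia|].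
  pose proof (brake_nonincr N); pose proof (brake_ge0 (S (S N))); lra.
Qed.

Lemma vel_brake k : vel tau v0 (controls_of tau brake) k = brake k.
Proof. exact (vel_controls_of tau brake k tau_gt0). Qed.

Lemma controls_of_brake0 : controls_of tau brake 0 = u 0%nat.
Proof. unfold controls_of; cbn [brake vel]; field; lra. Qed.

Section Admissible.

Variables (umin umax vbar : R) (N : nat).
Hypotheses (N_ge1 : (1 <= N)%nat) (umin_le : umin <= ub) (umax_gt0 : 0 < umax).
Hypotheses (u_adm : admissible tau umin umax vbar v0 u N) (stopped : brake N = 0).

Lemma brake_le_vel_adm k : (k <= N)%nat -> brake k <= vel tau v0 u k.
Proof. intros Hk; apply brake_le_vel, (proj2 u_adm k Hk). Qed.

Lemma controls_of_brake_in k :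
  (k < S N)%nat -> umin <= controls_of tau brake k <= umax.
Proof.
  destruct u_adm as [u_in _].
  intros Hk; apply controls_of_in; [exact tau_gt0|].
  destruct k as [|k]; [cbn [brake vel]; specialize (u_in 0%nat N_ge1); nra|].
  pose proof (brake_nonincr k).
  assert (0 < umax * tau) by (apply Rmult_lt_0_compat; lra).
  destruct (Nat.eq_dec (S k) N) as [<-|k_ne].
  { rewrite stopped, (brake_stopped (S k)) by (lia || exact stopped); nra. }
  pose proof (brake_SS_ge k) as step_ge.
  change (vel tau v0 u (S (S k))) with (vel tau v0 u (S k) + u (S k) * tau) in step_ge.
  pose proof (brake_le_vel_adm (S k) ltac:(lia)).
  assert (umin * tau <= u (S k) * tau)
    by (apply Rmult_le_compat_r; [lra | apply (u_in (S k)); lia]).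
  assert (umin * tau <= ub * tau) by (apply Rmult_le_compat_r; lra).
  revert step_ge; apply Rmin_case; intros; lra.
Qed.

Lemma admissible_brake : admissible tau umin umax vbar v0 (controls_of tau brake) (S N).
Proof.
  split; [exact controls_of_brake_in|].
  intros [|k] _; rewrite vel_brake; split; try apply brake_ge0.
  - exact (proj2 (proj2 u_adm 0%nat (Nat.le_0_l N))).
  - eapply Rle_trans; [apply brake_le_brake1|].
    exact (proj2 (proj2 u_adm 1%nat N_ge1)).
Qed.

Lemma posn_brake_le s0 : posn tau s0 v0 (controls_of tau brake) (S N) <= posn tau s0 v0 u N.
Proof.
  change (posn tau s0 v0 (controls_of tau brake) N
          + / 2 * (vel tau v0 (controls_of tau brake) N
                   + vel tau v0 (controls_of tau brake) (S N)) * tau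
          <= posn tau s0 v0 u N).
  rewrite !vel_brake, stopped, brake_stopped by assumption.
  rewrite Rplus_0_r, Rmult_0_r, Rmult_0_l, Rplus_0_r.
  apply posn_le_posn; [lra|].
  intros k Hk; rewrite vel_brake; apply brake_le_vel_adm, Hk.
Qed.

End Admissible.

End Braking.

Theorem lemma1 (tau : R) (K : nat) (vmax ub vbar umin umax s0 v0 : R)
  (u : nat -> R) :
  0 < tau -> (1 <= K)%nat -> 0 < vmax -> ub < 0 ->
  0 < vbar -> vbar <= vmax ->
  umin <= ub -> 0 < umax ->
  INR K * tau >= vmax / Rabs ub + tau ->
  0 <= v0 <= vbar ->
  admissible tau umin umax vbar v0 u K ->
  exists ut : nat -> R,
    admissible tau umin umax vbar v0 ut (S K) /\
    ut 0%nat = u 0%nat /\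
    vel tau v0 ut K = 0 /\ vel tau v0 ut (S K) = 0 /\
    posn tau s0 v0 ut (S K) <= posn tau s0 v0 u K.
Proof.
  intros tau_gt0 K_ge1 _ ub_lt0 _ vbar_le umin_le umax_gt0 horizon v0_in u_adm.
  assert (v0_ge0 : 0 <= v0) by apply v0_in.
  assert (vel1_in := proj2 u_adm 1%nat K_ge1).
  assert (vel1_ge0 : 0 <= vel tau v0 u 1) by apply vel1_in.
  assert (stopped : brake tau ub v0 u K = 0).
  { destruct K as [|K]; [lia|].
    pose proof (braking_horizon tau K vmax ub tau_gt0 ub_lt0 horizon).
    apply brake_eq0; cbn [brake]; lra. }
  exists (controls_of tau (brake tau ub v0 u)).
  rewrite !vel_brake, stopped, brake_stopped by (assumption || lia).
  refine (conj _ (conj _ (conj eq_refl (conj eq_refl _)))).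
  - apply admissible_brake with (umin := umin) (umax := umax) (vbar := vbar) (N := K);
      assumption.
  - apply controls_of_brake0; assumption.
  - apply posn_brake_le with umin umax vbar; assumption.
Qed.
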